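(* Let $n_1,\dots,n_t\ge 0$ be integers and let $G=K_{n_1\times 1,\,n_2\times 2,\,\dots,\,n_t\times t}$ be the complete $(n_1+\dots+n_t)$-partite graph having exactly $n_i$ parts of size $i$ for each $1\le i\le t$. Then $\binom{IDI(G)}{i}\ge n_i$ for every $1\le i\le t$.
   Context: For a finite simple connected graph $G=(V,E)$ with diameter $d$, a rank assignment is a function $f:V\to\mathbb{R}$; under $f$, the string of a vertex $v$ is the $d$-vector whose $i$-th coordinate is the sum of $f(w)$ over all vertices $w$ with $d(v,w)=i$. The ID-index $IDI(G)$ is the minimum $k$ such that there exists $f:V\to\mathbb{R}$ with $|f(V)|=k$ under which all vertices have distinct strings. *)

From Stdlib Require Import Reals.
From mathcomp Require Import all_boot all_order all_algebra.
From mathcomp Require Import Rstruct.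

Set Implicit Arguments.
Unset Strict Implicit.
Unset Printing Implicit Defensive.

Section GraphNotions.
Variables (V : finType) (e : rel V).

Fixpoint gball (d : nat) (x : V) : {set V} :=
  if d is d'.+1 then gball d' x :|: [set y | [exists z in gball d' x, e z y]]
  else [set x].

(* graph distance: least d (< #|V|) with y in the ball of radius d around x;
   this is the usual distance whenever the graph is connected *)
Definition gdist (x y : V) : nat :=
  find (fun d => y \in gball d x) (iota 0 #|V|).

Definition gconnected : Prop := forall x y : V, connect e x y.

Definition gdiam : nat := \max_(x : V) \max_(y : V) gdist x y.

(* string of v under rank assignment f: i-th coordinate (i = 1..diam) is the
   sum of f(w) over vertices w at distance i from v *)
Definition gstring (f : V -> R) (v : V) : {ffun 'I_gdiam -> R} :=
  [ffun i : 'I_gdiam => (\sum_(w | gdist v w == i.+1) f w)%R].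

Definition num_ranks (f : V -> R) : nat := size (undup [seq f v | v <- enum V]).

Definition IDI_achievable (k : nat) : Prop :=
  exists f : V -> R, num_ranks f = k /\ injective (gstring f).

Definition is_IDI (k : nat) : Prop :=
  IDI_achievable k /\ forall k', IDI_achievable k' -> k <= k'.

End GraphNotions.

Definition complete_multipartite (V : finType) (P : {set {set V}}) : rel V :=
  fun x y => pblock P x != pblock P y.

From Stdlib Require Import Reals.
From mathcomp Require Import all_boot all_order all_algebra.
From mathcomp Require Import Rstruct.
Import GRing.Theory.

Set Implicit Arguments.
Unset Strict Implicit.
Unset Printing Implicit Defensive.

(* In a complete multipartite graph with at least two parts, a vertex v in the
   part B is at distance 1 from every vertex outside B and at distance 2 from
   the other vertices of B, so its string is (S - f(B), f(B) - f v, 0, ...),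
   where f(B) is the rank sum of B and S the total rank sum.  Distinct strings
   therefore force f to be injective on every part, and force two parts with
   the same set of ranks (hence the same rank sum) to share a vertex, i.e. to
   coincide.  So the parts of size i embed into the i-subsets of f(V). *)

Section GraphDistance.
Variables (V : finType) (e : rel V).

Lemma gball0 x y : (y \in gball e 0 x) = (y == x).
Proof. by rewrite inE. Qed.

Lemma gball1 x y : (y \in gball e 1 x) = (y == x) || e x y.
Proof.
rewrite !inE; congr (_ || _); apply/existsP/idP => [[z /andP[]]|exy].
  by rewrite inE => /eqP ->.
by exists x; rewrite inE eqxx.
Qed.

Lemma gballS d x y z : z \in gball e d x -> e z y -> y \in gball e d.+1 x.
Proof.
move=> zx ezy; rewrite inE; apply/orP; right.
by rewrite inE; apply/existsP; exists z; rewrite zx.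
Qed.

Lemma gdist_eq d x y : d < #|V| -> y \in gball e d x ->
  (forall d', d' < d -> y \notin gball e d' x) -> gdist e x y = d.
Proof.
move=> ltdV yd ylt; rewrite /gdist -(subnKC (ltnW ltdV)) iotaD find_cat size_iota.
have -> : has (fun d' => y \in gball e d' x) (iota 0 d) = false.
  by apply/hasPn => d'; rewrite mem_iota => /ylt.
by rewrite -subnSK //= add0n yd addn0.
Qed.

Lemma connected_edgeless_eq :
  (forall x y, ~~ e x y) -> gconnected e -> forall x y : V, x = y.
Proof.
move=> noedge conn x y.
case/connectP: (conn x y) => [[|z p]] /=; first by move=> _ ->.
by rewrite (negbTE (noedge _ _)).
Qed.

End GraphDistance.

Section ValueIndex.
Variables (V : finType) (T : eqType) (f : V -> T).

Definition value_seq : seq T := undup [seq f v | v <- enum V].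

Lemma mem_value_seq v : f v \in value_seq.
Proof. by rewrite mem_undup map_f ?mem_enum. Qed.

Definition value_index v : 'I_(size value_seq) :=
  Ordinal (etrans (index_mem (f v) value_seq) (mem_value_seq v)).

Lemma nth_value_index x0 v : nth x0 value_seq (value_index v) = f v.
Proof. exact: nth_index (mem_value_seq v). Qed.

Lemma value_index_inj v w : value_index v = value_index w -> f v = f w.
Proof.
by move/(congr1 (nth (f v) value_seq \o val)) => /=; rewrite !nth_value_index.
Qed.

End ValueIndex.

Lemma card_le_bin_imset_inj (V W : finType) (g : V -> W) (A : {set {set V}}) i :
  (forall B, B \in A -> #|B| = i) ->
  (forall B, B \in A -> {in B &, injective g}) ->
  {in A &, injective (fun B : {set V} => g @: B)} -> #|A| <= 'C(#|W|, i).
Proof.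
move=> cardA ginj imsetinj; rewrite -card_draws -(card_in_imset imsetinj).
apply/subset_leq_card/subsetP => _ /imsetP[B BA ->].
by rewrite inE card_in_imset ?cardA //; exact: ginj.
Qed.

Section CompleteMultipartite.
Variables (V : finType) (P : {set {set V}}).
Hypothesis partP : partition P [set: V].
Local Notation e := (complete_multipartite P).

Let coverP x : x \in cover P.
Proof. by case/and3P: partP => /eqP ->. Qed.

Let trivP : trivIset P.
Proof. by case/and3P: partP. Qed.

Lemma mem_pblock_eq x v : (x \in pblock P v) = (pblock P x == pblock P v).
Proof. by rewrite eq_sym eq_pblock. Qed.

Lemma gdist_multipartite u v y : pblock P u != pblock P v ->
  gdist e v y = if y == v then 0 else if pblock P y == pblock P v then 2 else 1.
Proof.
move=> uv; have evu : e v u by rewrite /complete_multipartite eq_sym.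
have evy : e v y = (pblock P y != pblock P v).
  by rewrite /complete_multipartite eq_sym.
have [->|yv] := eqVneq y v.
  by apply: gdist_eq; [apply/card_gt0P; exists v | rewrite gball0 |].
case: ifPn => [yB|ynB].
  apply: gdist_eq.
  - apply/card_gt2P; exists y, v, u; do 2!split => //.
      by apply: contraNneq uv => <-.
    by apply: contraNneq uv => ->; rewrite (eqP yB).
  - by apply: (gballS (z := u)); rewrite ?gball1 ?evu ?orbT //
      /complete_multipartite (eqP yB) eq_sym.
  - by case=> [|[|//]] _; rewrite ?gball0 ?gball1 (negPf yv) ?evy ?yB.
apply: gdist_eq.
- by apply/card_gt1P; exists y, v.
- by rewrite gball1 evy ynB orbT.
- by case=> // _; rewrite gball0.
Qed.

Lemma exists_other_block x y :
  gconnected e -> x != y -> exists u, pblock P u != pblock P x.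
Proof.
move=> conn xy.
have [u ux|noother] := pickP (fun u => pblock P u != pblock P x).
  by exists u.
case/eqP: xy; apply: (connected_edgeless_eq _ conn) => a b.
rewrite /complete_multipartite negbK.
by rewrite (eqP (negbFE (noother a))) (eqP (negbFE (noother b))).
Qed.

Variable f : V -> R.
Local Notation blocksum B := (\sum_(x in B) f x)%R.

Lemma sum_gdist_multipartite u v m : pblock P u != pblock P v ->
  (\sum_(x | gdist e v x == m.+1) f x =
     if m == 0 then \sum_x f x - blocksum (pblock P v)
     else if m == 1 then blocksum (pblock P v) - f v else 0)%R.
Proof.
move=> uv; under eq_bigl => x do rewrite (gdist_multipartite _ uv).
case: m => [|[|m]] /=.
- rewrite [in RHS](bigID (mem (pblock P v))) /= addrAC subrr add0r.
  apply: eq_bigl => x; rewrite mem_pblock_eq.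
  by case: (eqVneq x v) => [->|_]; rewrite ?eqxx //; case: ifP.
- rewrite [in RHS](bigD1 v) ?mem_pblock //= addrAC subrr add0r.
  apply: eq_bigl => x; rewrite mem_pblock_eq.
  by case: (eqVneq x v); rewrite ?andbF ?andbT //=; case: ifP.
- by rewrite big_pred0 // => x; case: (x == v) => //; case: ifP.
Qed.

Hypotheses (connP : gconnected e) (stringinj : injective (gstring e f)).

Lemma multipartite_vertex_eq v w :
  f v = f w -> blocksum (pblock P v) = blocksum (pblock P w) -> v = w.
Proof.
move=> fvw sumvw; have [//|vw] := eqVneq v w.
have [u uv] := exists_other_block connP vw.
have wv : w != v by rewrite eq_sym.
have [u' u'w] := exists_other_block connP wv.
apply: stringinj; apply/ffunP => j; rewrite !ffunE.
by rewrite (sum_gdist_multipartite _ uv) (sum_gdist_multipartite _ u'w) fvw sumvw.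
Qed.

Lemma value_index_block_inj B : B \in P -> {in B &, injective (value_index f)}.
Proof.
move=> BP v w vB wB /value_index_inj fvw; apply: multipartite_vertex_eq fvw _.
by rewrite (def_pblock trivP BP vB) (def_pblock trivP BP wB).
Qed.

Lemma blocksum_imset_value_index B : B \in P ->
  blocksum B = (\sum_(a in value_index f @: B) nth 0 (value_seq f) a)%R.
Proof.
move=> BP; rewrite big_imset /=; last exact: value_index_block_inj.
by apply: eq_bigr => x _; rewrite nth_value_index.
Qed.

Lemma imset_value_index_inj :
  {in P &, injective (fun B : {set V} => value_index f @: B)}.
Proof.
move=> B B' BP B'P /= eqBB'.
have [v vB] : exists v, v \in B.
  by apply/set0Pn; apply: contraTneq BP => ->; case/and3P: partP.
have : value_index f v \in value_index f @: B' by rewrite -eqBB' imset_f.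
case/imsetP => w wB' /value_index_inj fvw.
rewrite -(def_pblock trivP BP vB) -(def_pblock trivP B'P wB').
congr (pblock P _); apply: multipartite_vertex_eq fvw _.
rewrite (def_pblock trivP BP vB) (def_pblock trivP B'P wB').
by rewrite !blocksum_imset_value_index // eqBB'.
Qed.

End CompleteMultipartite.

Theorem mainTheorem14 (t : nat) (n : nat -> nat) (V : finType)
    (P : {set {set V}}) (k : nat) :
  partition P [set: V] ->
  (forall B, B \in P -> #|B| <= t) ->
  (forall i, 1 <= i <= t -> #|[set B in P | #|B| == i]| = n i) ->
  gconnected (complete_multipartite P) ->
  is_IDI (complete_multipartite P) k ->
  forall i, 1 <= i <= t -> n i <= 'C(k, i).
Proof.
move=> partP _ cardP connP [[f [<- stringinj]] _] i /andP[i_gt0 ile].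
rewrite -(cardP i); last by rewrite i_gt0 ile.
have -> : num_ranks f = #|'I_(size (value_seq f))| by rewrite card_ord.
apply: (card_le_bin_imset_inj (g := value_index f)).
- by move=> B; rewrite inE => /andP[_ /eqP].
- move=> B; rewrite inE => /andP[BP _].
  exact: (value_index_block_inj partP connP stringinj).
- move=> B B'; rewrite !inE => /andP[BP _] /andP[B'P _].
  exact: (imset_value_index_inj partP connP stringinj).
Qed.
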